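(* Let $D\subseteq\mathbb{R}^3\setminus\{0\}$ be open and $\vec\mu:D\to\mathbb{R}^3$ smooth (depending only on $\vec\gamma$), regarded as a function on $\mathbb{R}^3\times D$. Then $\Pi_{\vec\mu}$ defines a Poisson bracket if and only if $\vec\gamma\cdot\operatorname{curl}_{\vec\gamma}\vec\mu=0$ on $D$, which is equivalent to $\operatorname{div}_{\vec\gamma}(\vec\gamma\times\vec\mu(\vec\gamma))=0$ on $D$.
   Context: Coordinates on $\mathbb{R}^6$ are $(\vec M,\vec\gamma)=(M_1,M_2,M_3,\gamma_1,\gamma_2,\gamma_3)$. For a smooth $\vec\mu=(\mu_1,\mu_2,\mu_3)$ of $(\vec M,\vec\gamma)$, $\Pi_{\vec\mu}$ is the skew-symmetric $6\times6$ matrix $$\Pi_{\vec\mu}=\begin{bmatrix}0&-M_3-\mu_3&M_2+\mu_2&0&-\gamma_3&\gamma_2\\ M_3+\mu_3&0&-M_1-\mu_1&\gamma_3&0&-\gamma_1\\ -M_2-\mu_2&M_1+\mu_1&0&-\gamma_2&\gamma_1&0\\ 0&-\gamma_3&\gamma_2&0&0&0\\ \gamma_3&0&-\gamma_1&0&0&0\\ -\gamma_2&\gamma_1&0&0&0&0\end{bmatrix},$$ and it ''defines a Poisson bracket'' if $\{f,g\}_{\vec\mu}=(\nabla f)^T\Pi_{\vec\mu}\nabla g$ satisfies the Jacobi identity. *)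

From Stdlib Require Import Reals Lra List ClassicalEpsilon.
Open Scope R_scope.

(** Points of R^3, and of R^6 = R^3_M x R^3_gamma as pairs (M, gamma).
    Coordinates are 0-indexed internally: index 0,1,2 of a V3 are
    components 1,2,3; indices 0..5 of a V6 are M1,M2,M3,g1,g2,g3. *)
Record V3 := mkV3 { c1 : R; c2 : R; c3 : R }.
Definition V6 : Type := (V3 * V3)%type.

Definition get3 (v : V3) (i : nat) : R :=
  match i with 0 => c1 v | 1 => c2 v | _ => c3 v end.
Definition upd3 (v : V3) (i : nat) (t : R) : V3 :=
  match i with
  | 0 => mkV3 t (c2 v) (c3 v)
  | 1 => mkV3 (c1 v) t (c3 v)
  | _ => mkV3 (c1 v) (c2 v) t
  end.

Definition get6 (p : V6) (i : nat) : R :=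
  match i with
  | 0 | 1 | 2 => get3 (fst p) i
  | S (S (S j)) => get3 (snd p) j
  end.
Definition upd6 (p : V6) (i : nat) (t : R) : V6 :=
  match i with
  | 0 | 1 | 2 => (upd3 (fst p) i t, snd p)
  | S (S (S j)) => (fst p, upd3 (snd p) j t)
  end.

Definition pd3 (i : nat) (F : V3 -> R) (v : V3) : R :=
  epsilon (inhabits 0) (fun l => derivable_pt_lim (fun t => F (upd3 v i t)) (get3 v i) l).
Definition pd6 (i : nat) (F : V6 -> R) (p : V6) : R :=
  epsilon (inhabits 0) (fun l => derivable_pt_lim (fun t => F (upd6 p i t)) (get6 p i) l).

Definition iter_pd3 (l : list nat) (F : V3 -> R) : V3 -> R :=
  fold_right (fun i G => pd3 i G) F l.
Definition iter_pd6 (l : list nat) (F : V6 -> R) : V6 -> R :=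
  fold_right (fun i G => pd6 i G) F l.

Definition dist3 (u v : V3) : R :=
  Rabs (c1 u - c1 v) + Rabs (c2 u - c2 v) + Rabs (c3 u - c3 v).
Definition dist6 (p q : V6) : R := dist3 (fst p) (fst q) + dist3 (snd p) (snd q).

Definition open3 (D : V3 -> Prop) : Prop :=
  forall v, D v -> exists r, 0 < r /\ forall w, dist3 w v < r -> D w.

Definition cont3_at (F : V3 -> R) (v : V3) : Prop :=
  forall eps, 0 < eps -> exists delta, 0 < delta /\
    forall w, dist3 w v < delta -> Rabs (F w - F v) < eps.
Definition cont6_at (F : V6 -> R) (p : V6) : Prop :=
  forall eps, 0 < eps -> exists delta, 0 < delta /\
    forall q, dist6 q p < delta -> Rabs (F q - F p) < eps.

Definition smooth3_on (D : V3 -> Prop) (F : V3 -> R) : Prop :=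
  forall (l : list nat) v, D v ->
    cont3_at (iter_pd3 l F) v /\
    forall i, (i < 3)%nat -> exists d,
      derivable_pt_lim (fun t => iter_pd3 l F (upd3 v i t)) (get3 v i) d.
Definition smooth6_on (U : V6 -> Prop) (F : V6 -> R) : Prop :=
  forall (l : list nat) p, U p ->
    cont6_at (iter_pd6 l F) p /\
    forall i, (i < 6)%nat -> exists d,
      derivable_pt_lim (fun t => iter_pd6 l F (upd6 p i t)) (get6 p i) d.

Definition smoothV3_on (D : V3 -> Prop) (mu : V3 -> V3) : Prop :=
  smooth3_on D (fun g => c1 (mu g)) /\ smooth3_on D (fun g => c2 (mu g)) /\
  smooth3_on D (fun g => c3 (mu g)).

Definition Pi (mu : V3 -> V3) (p : V6) (i j : nat) : R :=
  let M := fst p in let g := snd p in let m := mu g in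
  let a1 := c1 M + c1 m in let a2 := c2 M + c2 m in let a3 := c3 M + c3 m in
  match i, j with
  | 0, 1 => - a3 | 0, 2 => a2 | 0, 4 => - c3 g | 0, 5 => c2 g
  | 1, 0 => a3 | 1, 2 => - a1 | 1, 3 => c3 g | 1, 5 => - c1 g
  | 2, 0 => - a2 | 2, 1 => a1 | 2, 3 => - c2 g | 2, 4 => c1 g
  | 3, 1 => - c3 g | 3, 2 => c2 g
  | 4, 0 => c3 g | 4, 2 => - c1 g
  | 5, 0 => - c2 g | 5, 1 => c1 g
  | _, _ => 0
  end.

Definition bracket (mu : V3 -> V3) (f g : V6 -> R) : V6 -> R :=
  fun p => sum_f_R0 (fun i => sum_f_R0 (fun j =>
             pd6 i f p * Pi mu p i j * pd6 j g p) 5) 5.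

Definition defines_Poisson (mu : V3 -> V3) (U : V6 -> Prop) : Prop :=
  forall f g h : V6 -> R,
    smooth6_on U f -> smooth6_on U g -> smooth6_on U h ->
    forall p, U p ->
      bracket mu f (bracket mu g h) p + bracket mu g (bracket mu h f) p
      + bracket mu h (bracket mu f g) p = 0.

Definition dot3 (u v : V3) : R := c1 u * c1 v + c2 u * c2 v + c3 u * c3 v.
Definition cross3 (u v : V3) : V3 :=
  mkV3 (c2 u * c3 v - c3 u * c2 v) (c3 u * c1 v - c1 u * c3 v) (c1 u * c2 v - c2 u * c1 v).

Definition curl3 (w : V3 -> V3) (g : V3) : V3 :=
  mkV3 (pd3 1 (fun x => c3 (w x)) g - pd3 2 (fun x => c2 (w x)) g)
       (pd3 2 (fun x => c1 (w x)) g - pd3 0 (fun x => c3 (w x)) g)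
       (pd3 0 (fun x => c2 (w x)) g - pd3 1 (fun x => c1 (w x)) g).
Definition div3 (w : V3 -> V3) (g : V3) : R :=
  pd3 0 (fun x => c1 (w x)) g + pd3 1 (fun x => c2 (w x)) g + pd3 2 (fun x => c3 (w x)) g.

(** At (M, gamma), Pi_mu is the Lie-Poisson tensor of se(3)^* evaluated at
    (a, gamma) with a = M + mu(gamma), so that
    {f, g} = -(a . (f_M x g_M) + gamma . (f_M x g_gamma + f_gamma x g_M)).
    Expanding the Jacobiator by the Leibniz rule, the terms carrying second
    derivatives cancel in pairs (skew-symmetry of the tensor and symmetry of
    mixed partials), and the terms carrying the derivative of the tensor add up
    to -(gamma . curl mu) f_M . (g_M x h_M).  Testing the Jacobi identity on the
    coordinates M1, M2, M3 gives the first equivalence; the second is the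
    identity div(gamma x mu) = -gamma . curl mu. *)

From Stdlib Require Import Reals Lra Lia List ClassicalEpsilon FunctionalExtensionality.
Open Scope R_scope.

Ltac destruct_index i := destruct i as [|[|[|[|[|[|i]]]]]].

Lemma derivable_pt_lim_value f x l l' :
  derivable_pt_lim f x l -> l = l' -> derivable_pt_lim f x l'.
Proof. now intros H <-. Qed.

Lemma derivable_pt_lim_cst (c x : R) : derivable_pt_lim (fun _ => c) x 0.
Proof. apply derivable_pt_lim_const. Qed.

Lemma derivable_pt_lim_idR x : derivable_pt_lim (fun t => t) x 1.
Proof. apply derivable_pt_lim_id. Qed.

Lemma derivable_pt_lim_add f g x lf lg :
  derivable_pt_lim f x lf -> derivable_pt_lim g x lg ->
  derivable_pt_lim (fun t => f t + g t) x (lf + lg).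
Proof. apply derivable_pt_lim_plus. Qed.

Lemma derivable_pt_lim_sub f g x lf lg :
  derivable_pt_lim f x lf -> derivable_pt_lim g x lg ->
  derivable_pt_lim (fun t => f t - g t) x (lf - lg).
Proof. apply derivable_pt_lim_minus. Qed.

Lemma derivable_pt_lim_neg f x l :
  derivable_pt_lim f x l -> derivable_pt_lim (fun t => - f t) x (- l).
Proof. apply (derivable_pt_lim_opp f). Qed.

Lemma derivable_pt_lim_mul f g x lf lg :
  derivable_pt_lim f x lf -> derivable_pt_lim g x lg ->
  derivable_pt_lim (fun t => f t * g t) x (lf * g x + f x * lg).
Proof. apply (derivable_pt_lim_mult f g). Qed.

Lemma derivable_pt_lim_sum (F : nat -> R -> R) (F' : nat -> R) x n :
  (forall i, (i <= n)%nat -> derivable_pt_lim (F i) x (F' i)) ->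
  derivable_pt_lim (fun t => sum_f_R0 (fun i => F i t) n) x (sum_f_R0 F' n).
Proof.
  induction n as [|n IH]; intro H; cbn.
  - apply H; lia.
  - apply derivable_pt_lim_add; [apply IH; intros i Hi|]; apply H; lia.
Qed.

Lemma second_difference_mvt (h hu huv : R -> R -> R) x y s :
  0 < s ->
  (forall u v, x <= u <= x + s -> y <= v <= y + s ->
     derivable_pt_lim (fun t => h t v) u (hu u v)) ->
  (forall u v, x <= u <= x + s -> y <= v <= y + s ->
     derivable_pt_lim (fun t => hu u t) v (huv u v)) ->
  exists u v, x <= u <= x + s /\ y <= v <= y + s /\
    h (x + s) (y + s) - h (x + s) y - h x (y + s) + h x y = s * s * huv u v.
Proof.
  intros Hs Hh Hhu.
  destruct (MVT_cor2 (fun t => h t (y + s) - h t y) (fun t => hu t (y + s) - hu t y)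
              x (x + s)) as [u [Eu Hu]]; [lra| |].
  { intros u Hu. apply derivable_pt_lim_sub; apply Hh; lra. }
  destruct (MVT_cor2 (hu u) (huv u) y (y + s)) as [v [Ev Hv]]; [lra| |].
  { intros v Hv. apply Hhu; lra. }
  exists u, v. repeat split; try lra.
  replace (x + s - x) with s in Eu by ring. replace (y + s - y) with s in Ev by ring.
  rewrite Ev in Eu. lra.
Qed.

Lemma Req_of_Rabs_lt x y : (forall e, 0 < e -> Rabs (x - y) < e) -> x = y.
Proof.
  intro H. apply Rminus_diag_uniq. destruct (Req_dec (x - y) 0) as [|Hxy]; [assumption|].
  pose proof (H _ (Rabs_pos_lt _ Hxy)). lra.
Qed.

Lemma get6_upd6_same p i t : (i < 6)%nat -> get6 (upd6 p i t) i = t.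
Proof. intros. destruct p as [[] []]. destruct_index i; (reflexivity || lia). Qed.

Lemma get6_upd6_other p i j t :
  (i < 6)%nat -> (j < 6)%nat -> i <> j -> get6 (upd6 p i t) j = get6 p j.
Proof. intros. destruct p as [[] []]. destruct_index i; destruct_index j; (reflexivity || lia). Qed.

Lemma upd6_upd6_same p i t t' : (i < 6)%nat -> upd6 (upd6 p i t) i t' = upd6 p i t'.
Proof. intros. destruct p as [[] []]. destruct_index i; (reflexivity || lia). Qed.

Lemma upd6_upd6_comm p i j t t' : (i < 6)%nat -> (j < 6)%nat -> i <> j ->
  upd6 (upd6 p i t) j t' = upd6 (upd6 p j t') i t.
Proof. intros. destruct p as [[] []]. destruct_index i; destruct_index j; (reflexivity || lia). Qed.

Lemma upd6_get6 p i : (i < 6)%nat -> upd6 p i (get6 p i) = p.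
Proof. intros. destruct p as [[] []]. destruct_index i; (reflexivity || lia). Qed.

Lemma dist6_upd6 q p i t : (i < 6)%nat ->
  dist6 (upd6 q i t) p <= dist6 q p + Rabs (t - get6 q i).
Proof.
  intros Hi. destruct q as [[q1 q2 q3] [q4 q5 q6]], p as [[p1 p2 p3] [p4 p5 p6]].
  unfold dist6, dist3.
  destruct_index i; try lia; cbn;
  match goal with |- context [Rabs (t - ?y)] =>
    match goal with |- context [Rabs (y - ?z)] =>
      replace (t - z) with ((y - z) + (t - y)) by ring;
      pose proof (Rabs_triang (y - z) (t - y)) end end; lra.
Qed.

Lemma dist6_upd6_upd6 p i j u v : (i < 6)%nat -> (j < 6)%nat -> i <> j ->
  dist6 (upd6 (upd6 p i u) j v) p <= Rabs (u - get6 p i) + Rabs (v - get6 p j).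
Proof.
  intros Hi Hj Hij.
  pose proof (dist6_upd6 (upd6 p i u) p j v Hj) as Hv.
  pose proof (dist6_upd6 p p i u Hi) as Hu.
  rewrite get6_upd6_other in Hv by assumption.
  replace (dist6 p p) with 0 in Hu
    by (unfold dist6, dist3; rewrite !Rminus_diag, Rabs_R0; ring).
  lra.
Qed.

Lemma pd6_unique i F p l :
  derivable_pt_lim (fun t => F (upd6 p i t)) (get6 p i) l -> pd6 i F p = l.
Proof.
  intro H. unfold pd6.
  apply (uniqueness_limite (fun t => F (upd6 p i t)) (get6 p i)); [|exact H].
  apply epsilon_spec. now exists l.
Qed.

Lemma pd3_unique i F g l :
  derivable_pt_lim (fun t => F (upd3 g i t)) (get3 g i) l -> pd3 i F g = l.
Proof.
  intro H. unfold pd3.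
  apply (uniqueness_limite (fun t => F (upd3 g i t)) (get3 g i)); [|exact H].
  apply epsilon_spec. now exists l.
Qed.

Lemma smooth6_pd U F i : smooth6_on U F -> smooth6_on U (pd6 i F).
Proof.
  intros HF l p Up. specialize (HF (l ++ i :: nil) p Up).
  unfold iter_pd6 in *. now rewrite fold_right_app in HF.
Qed.

Lemma smooth6_cont U F p : smooth6_on U F -> U p -> cont6_at F p.
Proof. intros HF Up. exact (proj1 (HF nil p Up)). Qed.

Lemma smooth6_derivable U F p i : smooth6_on U F -> U p -> (i < 6)%nat ->
  derivable_pt_lim (fun t => F (upd6 p i t)) (get6 p i) (pd6 i F p).
Proof.
  intros HF Up Hi. destruct (proj2 (HF nil p Up) i Hi) as [d Hd].
  now rewrite (pd6_unique i F p d Hd).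
Qed.

Lemma smooth6_derivable_line U F q i t0 :
  smooth6_on U F -> U (upd6 q i t0) -> (i < 6)%nat ->
  derivable_pt_lim (fun t => F (upd6 q i t)) t0 (pd6 i F (upd6 q i t0)).
Proof.
  intros HF Uq Hi. pose proof (smooth6_derivable U F _ i HF Uq Hi) as H.
  rewrite get6_upd6_same in H by assumption.
  apply (derivable_pt_lim_ext (fun t => F (upd6 (upd6 q i t0) i t))); [|exact H].
  intro t. now rewrite upd6_upd6_same.
Qed.

Lemma smooth3_derivable D F g i : smooth3_on D F -> D g -> (i < 3)%nat ->
  derivable_pt_lim (fun t => F (upd3 g i t)) (get3 g i) (pd3 i F g).
Proof.
  intros HF Dg Hi. destruct (proj2 (HF nil g Dg) i Hi) as [d Hd].
  now rewrite (pd3_unique i F g d Hd).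
Qed.

(** * Symmetry of second partial derivatives *)

Definition open6 (U : V6 -> Prop) : Prop :=
  forall p, U p -> exists r, 0 < r /\ forall q, dist6 q p < r -> U q.

Lemma open6_snd D : open3 D -> open6 (fun p => D (snd p)).
Proof.
  intros HD p Dp. destruct (HD _ Dp) as [r [Hr H]]. exists r; split; [assumption|].
  intros q Hq. apply H. unfold dist6, dist3 in *.
  pose proof (Rabs_pos (c1 (fst q) - c1 (fst p))).
  pose proof (Rabs_pos (c2 (fst q) - c2 (fst p))).
  pose proof (Rabs_pos (c3 (fst q) - c3 (fst p))). lra.
Qed.

Lemma second_difference_partials U F p i j r s :
  smooth6_on U F -> (i < 6)%nat -> (j < 6)%nat -> i <> j ->
  (forall q, dist6 q p < r -> U q) -> 0 < s -> 2 * s < r ->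
  exists u v, get6 p i <= u <= get6 p i + s /\ get6 p j <= v <= get6 p j + s /\
    let F2 u v := F (upd6 (upd6 p i u) j v) in
    F2 (get6 p i + s) (get6 p j + s) - F2 (get6 p i + s) (get6 p j)
    - F2 (get6 p i) (get6 p j + s) + F2 (get6 p i) (get6 p j)
    = s * s * pd6 j (pd6 i F) (upd6 (upd6 p i u) j v).
Proof.
  intros HF Hi Hj Hij Hball Hs Hsr.
  assert (Hsquare : forall u v, get6 p i <= u <= get6 p i + s ->
            get6 p j <= v <= get6 p j + s -> U (upd6 (upd6 p i u) j v)).
  { intros u v Hu Hv. apply Hball.
    eapply Rle_lt_trans; [apply dist6_upd6_upd6; assumption|].
    rewrite !Rabs_right by lra. lra. }
  apply second_difference_mvt with (hu := fun u v => pd6 i F (upd6 (upd6 p i u) j v));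
    [exact Hs| |].
  - intros u v Hu Hv.
    apply (derivable_pt_lim_ext (fun t => F (upd6 (upd6 p j v) i t))).
    { intro t. now rewrite upd6_upd6_comm. }
    rewrite (upd6_upd6_comm p i j) by assumption.
    apply (smooth6_derivable_line U); [exact HF| |exact Hi].
    rewrite <- upd6_upd6_comm by auto. now apply Hsquare.
  - intros u v Hu Hv.
    apply (smooth6_derivable_line U); [now apply smooth6_pd|now apply Hsquare|exact Hj].
Qed.

Lemma pd6_comm U F p a b : open6 U -> smooth6_on U F -> U p ->
  (a < 6)%nat -> (b < 6)%nat -> pd6 a (pd6 b F) p = pd6 b (pd6 a F) p.
Proof.
  intros HU HF Up Ha Hb.
  destruct (Nat.eq_dec a b) as [<- | Hab]; [reflexivity|].
  destruct (HU p Up) as [r [Hr Hball]].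
  apply Req_of_Rabs_lt. intros e He.
  destruct (smooth6_cont U _ p (smooth6_pd U _ a (smooth6_pd U F b HF)) Up (e / 2))
    as [d1 [Hd1 Hcont1]]; [lra|].
  destruct (smooth6_cont U _ p (smooth6_pd U _ b (smooth6_pd U F a HF)) Up (e / 2))
    as [d2 [Hd2 Hcont2]]; [lra|].
  set (s := Rmin r (Rmin d1 d2) / 4).
  assert (Hs : 0 < s) by (apply Rdiv_lt_0_compat; [repeat apply Rmin_pos|]; lra).
  assert (Hsr : 4 * s <= r /\ 4 * s <= d1 /\ 4 * s <= d2).
  { unfold s. pose proof (Rmin_l r (Rmin d1 d2)). pose proof (Rmin_r r (Rmin d1 d2)).
    pose proof (Rmin_l d1 d2). pose proof (Rmin_r d1 d2). lra. }
  destruct Hsr as [Hsr [Hsd1 Hsd2]].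
  destruct (second_difference_partials U F p a b r s) as [u [v [Hu [Hv Eab]]]];
    try assumption; try lra.
  destruct (second_difference_partials U F p b a r s) as [v' [u' [Hv' [Hu' Eba]]]];
    auto; try lra.
  cbv zeta in Eab, Eba. rewrite !(upd6_upd6_comm p b a) in Eba by auto.
  assert (Hmeet : pd6 b (pd6 a F) (upd6 (upd6 p a u) b v)
                  = pd6 a (pd6 b F) (upd6 (upd6 p a u') b v')).
  { apply Rmult_eq_reg_l with (s * s); [lra|]. nra. }
  assert (Hnear : forall x y, get6 p a <= x <= get6 p a + s ->
            get6 p b <= y <= get6 p b + s -> dist6 (upd6 (upd6 p a x) b y) p <= 2 * s).
  { intros x y Hx Hy. eapply Rle_trans; [apply dist6_upd6_upd6; assumption|].
    rewrite !Rabs_right by lra. lra. }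
  pose proof (Hcont1 _ (Rle_lt_trans _ _ d1 (Hnear u' v' Hu' Hv') ltac:(lra))) as H1.
  pose proof (Hcont2 _ (Rle_lt_trans _ _ d2 (Hnear u v Hu Hv) ltac:(lra))) as H2.
  cbn in H1, H2. rewrite Hmeet in H2.
  apply Rabs_def2 in H1. apply Rabs_def2 in H2. apply Rabs_def1; lra.
Qed.

(** * The Lie-Poisson tensor of se(3)^* *)

Definition zero3 : V3 := mkV3 0 0 0.
Definition add3 (u v : V3) : V3 := mkV3 (c1 u + c1 v) (c2 u + c2 v) (c3 u + c3 v).

Definition se3_tensor (a g : V3) (i j : nat) : R :=
  match i, j with
  | 0, 1 => - c3 a | 0, 2 => c2 a | 0, 4 => - c3 g | 0, 5 => c2 g
  | 1, 0 => c3 a | 1, 2 => - c1 a | 1, 3 => c3 g | 1, 5 => - c1 g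
  | 2, 0 => - c2 a | 2, 1 => c1 a | 2, 3 => - c2 g | 2, 4 => c1 g
  | 3, 1 => - c3 g | 3, 2 => c2 g
  | 4, 0 => c3 g | 4, 2 => - c1 g
  | 5, 0 => - c2 g | 5, 1 => c1 g
  | _, _ => 0
  end.

Lemma Pi_se3_tensor mu p : Pi mu p = se3_tensor (add3 (fst p) (mu (snd p))) (snd p).
Proof. reflexivity. Qed.

Definition form6 (P : nat -> nat -> R) (X Y : nat -> R) : R :=
  sum_f_R0 (fun i => sum_f_R0 (fun j => X i * P i j * Y j) 5) 5.

Definition headV (X : nat -> R) : V3 := mkV3 (X 0%nat) (X 1%nat) (X 2%nat).
Definition tailV (X : nat -> R) : V3 := mkV3 (X 3%nat) (X 4%nat) (X 5%nat).

Definition se3_form (a g : V3) (X Y : nat -> R) : R :=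
  - (dot3 a (cross3 (headV X) (headV Y))
     + dot3 g (add3 (cross3 (headV X) (tailV Y)) (cross3 (tailV X) (headV Y)))).

Lemma form6_se3_tensor a g X Y : form6 (se3_tensor a g) X Y = se3_form a g X Y.
Proof. cbv -[Rplus Rmult Ropp]. ring. Qed.

Lemma se3_form_ext a g X Y Y' : (forall l, (l < 6)%nat -> Y l = Y' l) ->
  se3_form a g X Y = se3_form a g X Y'.
Proof. intro HY. unfold se3_form, headV, tailV. repeat rewrite HY by lia. reflexivity. Qed.

Lemma se3_form_add_r a g X Y Z :
  se3_form a g X (fun l => Y l + Z l) = se3_form a g X Y + se3_form a g X Z.
Proof. unfold se3_form, headV, tailV, dot3, cross3, add3; cbn. ring. Qed.

Lemma se3_form_hessian a g F G S :
  (forall i j, (i < 6)%nat -> (j < 6)%nat -> S i j = S j i) ->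
  se3_form a g F (fun l => se3_form a g G (S l))
  + se3_form a g G (fun l => se3_form a g (S l) F) = 0.
Proof.
  intro HS. unfold se3_form, headV, tailV, dot3, cross3, add3; cbn.
  repeat match goal with
  | |- context [S ?i ?j] =>
      lazymatch eval compute in (Nat.ltb j i) with true => rewrite (HS i j) by lia end
  end.
  ring.
Qed.

Definition e6 (l : nat) : V6 := upd6 (zero3, zero3) l 1.

Definition mat3_apply (c : nat -> V3) (v : V3) : V3 :=
  mkV3 (c1 v * c1 (c 0%nat) + c2 v * c1 (c 1%nat) + c3 v * c1 (c 2%nat))
       (c1 v * c2 (c 0%nat) + c2 v * c2 (c 1%nat) + c3 v * c2 (c 2%nat))
       (c1 v * c3 (c 0%nat) + c2 v * c3 (c 1%nat) + c3 v * c3 (c 2%nat)).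

Definition curl_cols (c : nat -> V3) : V3 :=
  mkV3 (c3 (c 1%nat) - c2 (c 2%nat)) (c1 (c 2%nat) - c3 (c 0%nat))
       (c2 (c 0%nat) - c1 (c 1%nat)).

(* [c j] stands for the j-th column of the Jacobian of mu, so that [dP l] is the
   bracket of the derivative of the tensor along the l-th coordinate of R^6. *)
Lemma se3_form_first_order a g c F G H :
  let dP l := se3_form (add3 (fst (e6 l)) (mat3_apply c (snd (e6 l)))) (snd (e6 l)) in
  se3_form a g F (fun l => dP l G H) + se3_form a g G (fun l => dP l H F)
  + se3_form a g H (fun l => dP l F G)
  = - dot3 g (curl_cols c) * dot3 (headV F) (cross3 (headV G) (headV H)).
Proof.
  cbv beta zeta iota delta [se3_form headV tailV dot3 cross3 add3 mat3_apply curl_cols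
    e6 zero3 upd6 upd3 fst snd c1 c2 c3].
  ring.
Qed.

(** * The Jacobiator of the bracket *)

Definition derivable3_lim (A : R -> V3) (x : R) (A' : V3) : Prop :=
  derivable_pt_lim (fun t => c1 (A t)) x (c1 A') /\
  derivable_pt_lim (fun t => c2 (A t)) x (c2 A') /\
  derivable_pt_lim (fun t => c3 (A t)) x (c3 A').

Lemma se3_tensor_derivable A G A' G' x i j :
  derivable3_lim A x A' -> derivable3_lim G x G' ->
  derivable_pt_lim (fun t => se3_tensor (A t) (G t) i j) x (se3_tensor A' G' i j).
Proof.
  intros (HA1 & HA2 & HA3) (HG1 & HG2 & HG3).
  destruct_index i; destruct_index j; cbn;
  first [ apply derivable_pt_lim_cst | assumption | now apply derivable_pt_lim_neg ].
Qed.

Definition jac3 (mu : V3 -> V3) (g : V3) (j : nat) : V3 :=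
  mkV3 (pd3 j (fun x => c1 (mu x)) g) (pd3 j (fun x => c2 (mu x)) g)
       (pd3 j (fun x => c3 (mu x)) g).

Lemma curl3_jac3 mu g : curl3 mu g = curl_cols (jac3 mu g).
Proof. reflexivity. Qed.

(* Chain rule: the derivative of M + mu(gamma) along the l-th coordinate of R^6. *)
Definition pd6_Mmu (mu : V3 -> V3) (g : V3) (l : nat) : V3 :=
  add3 (fst (e6 l)) (mat3_apply (jac3 mu g) (snd (e6 l))).

Lemma Mmu_derivable D mu p l : smoothV3_on D mu -> D (snd p) -> (l < 6)%nat ->
  derivable3_lim (fun t => add3 (fst (upd6 p l t)) (mu (snd (upd6 p l t))))
    (get6 p l) (pd6_Mmu mu (snd p) l).
Proof.
  intros (H1 & H2 & H3) Dp Hl.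
  destruct_index l; try lia; repeat split;
  (eapply derivable_pt_lim_value;
   [ apply derivable_pt_lim_add;
     [ cbn [upd6 upd3 fst snd c1 c2 c3];
       first [ apply derivable_pt_lim_idR | apply derivable_pt_lim_cst ]
     | cbn [upd6 fst snd];
       first [ apply derivable_pt_lim_cst
             | apply (smooth3_derivable _ _ _ _ H1 Dp); lia
             | apply (smooth3_derivable _ _ _ _ H2 Dp); lia
             | apply (smooth3_derivable _ _ _ _ H3 Dp); lia ] ]
   | cbv beta iota delta [pd6_Mmu add3 mat3_apply jac3 e6 zero3 upd6 upd3 fst snd c1 c2 c3];
     ring ]).
Qed.

Lemma snd_upd6_derivable p l : (l < 6)%nat ->
  derivable3_lim (fun t => snd (upd6 p l t)) (get6 p l) (snd (e6 l)).
Proof.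
  intros Hl. destruct_index l; try lia; repeat split; cbn;
  first [ apply derivable_pt_lim_idR | apply derivable_pt_lim_cst ].
Qed.

Lemma form6_derivable (P : R -> nat -> nat -> R) (X Y : R -> nat -> R) P' X' Y' x :
  (forall i j, (i <= 5)%nat -> (j <= 5)%nat -> derivable_pt_lim (fun t => P t i j) x (P' i j)) ->
  (forall i, (i <= 5)%nat -> derivable_pt_lim (fun t => X t i) x (X' i)) ->
  (forall j, (j <= 5)%nat -> derivable_pt_lim (fun t => Y t j) x (Y' j)) ->
  derivable_pt_lim (fun t => form6 (P t) (X t) (Y t)) x
    (form6 (P x) X' (Y x) + form6 P' (X x) (Y x) + form6 (P x) (X x) Y').
Proof.
  intros HP HX HY. eapply derivable_pt_lim_value.
  - apply (derivable_pt_lim_sum (fun i t => sum_f_R0 (fun j => X t i * P t i j * Y t j) 5)).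
    intros i Hi.
    apply (derivable_pt_lim_sum (fun j t => X t i * P t i j * Y t j)). intros j Hj.
    apply derivable_pt_lim_mul; [apply derivable_pt_lim_mul|]; auto.
  - unfold form6. cbn [sum_f_R0]. ring.
Qed.

Definition grad6 (F : V6 -> R) (p : V6) (i : nat) : R := pd6 i F p.
Definition hess6 (F : V6 -> R) (p : V6) (l i : nat) : R := pd6 l (pd6 i F) p.

Section Bracket.

Variables (D : V3 -> Prop) (mu : V3 -> V3).
Hypotheses (HD : open3 D) (Hmu : smoothV3_on D mu).

Let U (p : V6) : Prop := D (snd p).

Lemma pd6_bracket g h p l : smooth6_on U g -> smooth6_on U h -> U p -> (l < 6)%nat ->
  pd6 l (bracket mu g h) p
  = form6 (Pi mu p) (hess6 g p l) (grad6 h p)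
    + form6 (se3_tensor (pd6_Mmu mu (snd p) l) (snd (e6 l))) (grad6 g p) (grad6 h p)
    + form6 (Pi mu p) (grad6 g p) (hess6 h p l).
Proof.
  intros Hg Hh Up Hl. apply pd6_unique.
  pose proof (form6_derivable (fun t => Pi mu (upd6 p l t))
    (fun t i => pd6 i g (upd6 p l t)) (fun t j => pd6 j h (upd6 p l t))
    (se3_tensor (pd6_Mmu mu (snd p) l) (snd (e6 l))) (hess6 g p l) (hess6 h p l) (get6 p l))
    as H.
  cbv beta in H. rewrite upd6_get6 in H by assumption. apply H.
  - intros i j _ _.
    exact (se3_tensor_derivable _ _ _ _ _ i j (Mmu_derivable D mu p l Hmu Up Hl)
             (snd_upd6_derivable p l Hl)).
  - intros i _. apply (smooth6_derivable U); [apply smooth6_pd|..]; assumption.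
  - intros j _. apply (smooth6_derivable U); [apply smooth6_pd|..]; assumption.
Qed.

Lemma bracket_bracket f g h p : smooth6_on U g -> smooth6_on U h -> U p ->
  let P := se3_form (add3 (fst p) (mu (snd p))) (snd p) in
  bracket mu f (bracket mu g h) p
  = P (grad6 f p) (fun l => P (hess6 g p l) (grad6 h p))
    + P (grad6 f p) (fun l => se3_form (pd6_Mmu mu (snd p) l) (snd (e6 l))
                                 (grad6 g p) (grad6 h p))
    + P (grad6 f p) (fun l => P (grad6 g p) (hess6 h p l)).
Proof.
  intros Hg Hh Up. cbv zeta.
  change (bracket mu f (bracket mu g h) p)
    with (form6 (Pi mu p) (grad6 f p) (grad6 (bracket mu g h) p)).
  rewrite Pi_se3_tensor, form6_se3_tensor, <- !se3_form_add_r.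
  apply se3_form_ext. intros l Hl. unfold grad6 at 1.
  rewrite pd6_bracket, Pi_se3_tensor, !form6_se3_tensor by assumption. reflexivity.
Qed.

Lemma jacobiator f g h p :
  smooth6_on U f -> smooth6_on U g -> smooth6_on U h -> U p ->
  bracket mu f (bracket mu g h) p + bracket mu g (bracket mu h f) p
  + bracket mu h (bracket mu f g) p
  = - dot3 (snd p) (curl3 mu (snd p))
      * dot3 (headV (grad6 f p)) (cross3 (headV (grad6 g p)) (headV (grad6 h p))).
Proof.
  intros Hf Hg Hh Up. rewrite !bracket_bracket by assumption. cbv zeta.
  set (a := add3 (fst p) (mu (snd p))).
  assert (Hsym : forall F, smooth6_on U F ->
            forall i j, (i < 6)%nat -> (j < 6)%nat -> hess6 F p i j = hess6 F p j i).
  { intros F HF i j Hi Hj. apply (pd6_comm U); try assumption. now apply open6_snd. }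
  pose proof (se3_form_hessian a (snd p) (grad6 f p) (grad6 g p) _ (Hsym h Hh)).
  pose proof (se3_form_hessian a (snd p) (grad6 g p) (grad6 h p) _ (Hsym f Hf)).
  pose proof (se3_form_hessian a (snd p) (grad6 h p) (grad6 f p) _ (Hsym g Hg)).
  pose proof (se3_form_first_order a (snd p) (jac3 mu (snd p))
                (grad6 f p) (grad6 g p) (grad6 h p)).
  rewrite curl3_jac3. cbv zeta in *. unfold pd6_Mmu. lra.
Qed.

End Bracket.

Definition coord6 (m : nat) (q : V6) : R := get6 q m.

Lemma coord6_derivable m q i :
  derivable_pt_lim (fun t => coord6 m (upd6 q i t)) (get6 q i) (get6 (e6 i) m).
Proof.
  unfold coord6, e6. destruct_index i; destruct_index m; cbn;
  first [ apply derivable_pt_lim_idR | apply derivable_pt_lim_cst ].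
Qed.

Lemma pd6_coord6 m i : pd6 i (coord6 m) = fun _ => get6 (e6 i) m.
Proof. apply functional_extensionality. intro q. apply pd6_unique, coord6_derivable. Qed.

Lemma pd6_const i c : pd6 i (fun _ : V6 => c) = fun _ => 0.
Proof.
  apply functional_extensionality. intro q. apply pd6_unique, derivable_pt_lim_cst.
Qed.

Lemma iter_pd6_coord6 m i l : exists c, iter_pd6 (i :: l) (coord6 m) = fun _ => c.
Proof.
  revert i. induction l as [|j l IH]; intro i.
  - exists (get6 (e6 i) m). apply pd6_coord6.
  - exists 0. destruct (IH j) as [c Hc].
    change (pd6 i (iter_pd6 (j :: l) (coord6 m)) = fun _ => 0). now rewrite Hc, pd6_const.
Qed.

Lemma coord6_lipschitz m q p : Rabs (coord6 m q - coord6 m p) <= dist6 q p.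
Proof.
  destruct q as [[q1 q2 q3] [q4 q5 q6]], p as [[p1 p2 p3] [p4 p5 p6]].
  unfold coord6, dist6, dist3.
  pose proof (Rabs_pos (q1 - p1)). pose proof (Rabs_pos (q2 - p2)).
  pose proof (Rabs_pos (q3 - p3)). pose proof (Rabs_pos (q4 - p4)).
  pose proof (Rabs_pos (q5 - p5)). pose proof (Rabs_pos (q6 - p6)).
  destruct_index m; cbn; lra.
Qed.

Lemma smooth6_coord6 U m : smooth6_on U (coord6 m).
Proof.
  intros l p _. destruct l as [|i l].
  - split.
    + intros e He. exists e. split; [assumption|]. intros q Hq.
      pose proof (coord6_lipschitz m q p). cbn. lra.
    + intros i _. eexists. apply coord6_derivable.
  - destruct (iter_pd6_coord6 m i l) as [c ->]. split.
    + intros e He. exists 1. split; [lra|]. intros. rewrite Rminus_diag, Rabs_R0. lra.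
    + intros j _. eexists. apply derivable_pt_lim_cst.
Qed.

Lemma coord6_triple_product p :
  dot3 (headV (grad6 (coord6 0) p))
       (cross3 (headV (grad6 (coord6 1) p)) (headV (grad6 (coord6 2) p))) = 1.
Proof. unfold headV, grad6. rewrite !pd6_coord6. unfold dot3, cross3. cbn. ring. Qed.

Lemma get3_upd3_other g i k t : (i < 3)%nat -> (k < 3)%nat -> k <> i ->
  get3 (upd3 g i t) k = get3 g k.
Proof.
  intros. destruct g. destruct i as [|[|[|i]]]; destruct k as [|[|[|k]]]; (reflexivity || lia).
Qed.

Lemma pd3_coord_mul_sub D F G g i k m :
  smooth3_on D F -> smooth3_on D G -> D g -> (i < 3)%nat -> (k < 3)%nat -> (m < 3)%nat ->
  k <> i -> m <> i ->
  pd3 i (fun x => get3 x k * F x - get3 x m * G x) g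
  = get3 g k * pd3 i F g - get3 g m * pd3 i G g.
Proof.
  intros HF HG Dg Hi Hk Hm Hki Hmi. apply pd3_unique.
  apply (derivable_pt_lim_ext (fun t => get3 g k * F (upd3 g i t) - get3 g m * G (upd3 g i t))).
  { intro t. now rewrite !get3_upd3_other. }
  eapply derivable_pt_lim_value.
  - apply derivable_pt_lim_sub; apply derivable_pt_lim_mul;
      [apply derivable_pt_lim_cst | apply (smooth3_derivable D) |
       apply derivable_pt_lim_cst | apply (smooth3_derivable D)]; assumption.
  - cbv beta. ring.
Qed.

Lemma div3_cross D mu g : smoothV3_on D mu -> D g ->
  div3 (fun x => cross3 x (mu x)) g = - dot3 g (curl3 mu g).
Proof.
  intros (H1 & H2 & H3) Dg.
  change (pd3 0 (fun x => get3 x 1 * c3 (mu x) - get3 x 2 * c2 (mu x)) g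
          + pd3 1 (fun x => get3 x 2 * c1 (mu x) - get3 x 0 * c3 (mu x)) g
          + pd3 2 (fun x => get3 x 0 * c2 (mu x) - get3 x 1 * c1 (mu x)) g
          = - dot3 g (curl3 mu g)).
  rewrite (pd3_coord_mul_sub D _ _ g 0 1 2 H3 H2 Dg),
          (pd3_coord_mul_sub D _ _ g 1 2 0 H1 H3 Dg),
          (pd3_coord_mul_sub D _ _ g 2 0 1 H2 H1 Dg) by lia.
  unfold dot3, curl3. cbn. ring.
Qed.

Theorem mainTheorem5 (D : V3 -> Prop) (mu : V3 -> V3) :
  open3 D ->
  (forall g, D g -> g <> mkV3 0 0 0) ->
  smoothV3_on D mu ->
  (defines_Poisson mu (fun p : V6 => D (snd p)) <->
     (forall g, D g -> dot3 g (curl3 mu g) = 0)) /\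
  ((forall g, D g -> dot3 g (curl3 mu g) = 0) <->
     (forall g, D g -> div3 (fun x => cross3 x (mu x)) g = 0)).
Proof.
  intros HD _ Hmu. split; split.
  - intros HPoisson g Dg.
    pose proof (HPoisson _ _ _ (smooth6_coord6 _ 0) (smooth6_coord6 _ 1)
                  (smooth6_coord6 _ 2) (zero3, g) Dg) as HJ.
    rewrite (jacobiator D mu HD Hmu), coord6_triple_product in HJ
      by (apply smooth6_coord6 || exact Dg).
    cbn [snd] in HJ. lra.
  - intros Hcurl f g h Hf Hg Hh p Dp.
    rewrite (jacobiator D mu HD Hmu), Hcurl by assumption. ring.
  - intros Hcurl g Dg. rewrite (div3_cross D), Hcurl by assumption. ring.
  - intros Hdiv g Dg. specialize (Hdiv g Dg).
    rewrite (div3_cross D) in Hdiv by assumption. lra.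
Qed.
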